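(* Let $G=(V,E)$ be a finite Eulerian graph (every vertex has even degree; $G$ need not be connected). For $A\subseteq E$ let $\varepsilon(A)$ denote the number of Eulerian orientations of the graph $(V,A)$ and let $h(A)$ denote the number of half graphs of $(V,A)$. Then $$\varepsilon(G)^2=\sum_{A\subseteq E}\varepsilon(A)\,\varepsilon(E\setminus A)\qquad\text{and}\qquad h(G)^2=\sum_{A\subseteq E}h(A)\,h(E\setminus A),$$ where $\varepsilon(G)=\varepsilon(E)$ and $h(G)=h(E)$.
   Context: An Eulerian orientation of a graph is an orientation of its edges in which every vertex has in-degree equal to its out-degree. A half graph of a graph $F=(V,A)$ is a subset $S\subseteq A$ of edges such that for every vertex $v$ the number of edges of $S$ incident to $v$ equals $d_F(v)/2$, where $d_F(v)$ is the degree of $v$ in $F$. (If some vertex has odd degree in $(V,A)$, then $\varepsilon(A)=h(A)=0$.) *)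

From mathcomp Require Import all_boot.
Set Implicit Arguments. Unset Strict Implicit. Unset Printing Implicit Defensive.

(* A finite loopless multigraph: vertex type V, edge type E, each edge e has
   endpoints (src e, dst e) with src e <> dst e (the pair only fixes a
   reference direction, the graph itself is undirected). *)

Definition incident (V E : finType) (src dst : E -> V) (A : {set E}) (v : V)
  : {set E} := [set e in A | (src e == v) || (dst e == v)].

Definition deg (V E : finType) (src dst : E -> V) (A : {set E}) (v : V) : nat :=
  #|incident src dst A v|.

(* An orientation of (V,A): o e = true means e is directed src e -> dst e,
   false means dst e -> src e.  Values outside A are irrelevant, so we
   normalise them to false to count each orientation of A exactly once. *)
Definition outdeg (V E : finType) (src dst : E -> V) (A : {set E})
  (o : {ffun E -> bool}) (v : V) : nat :=
  #|[set e in A | if o e then src e == v else dst e == v]|.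

Definition indeg (V E : finType) (src dst : E -> V) (A : {set E})
  (o : {ffun E -> bool}) (v : V) : nat :=
  #|[set e in A | if o e then dst e == v else src e == v]|.

Definition eulerian_orientation (V E : finType) (src dst : E -> V)
  (A : {set E}) (o : {ffun E -> bool}) : bool :=
  [forall e, (e \notin A) ==> ~~ o e] &&
  [forall v, indeg src dst A o v == outdeg src dst A o v].

Definition n_eul_or (V E : finType) (src dst : E -> V) (A : {set E}) : nat :=
  #|[set o : {ffun E -> bool} | eulerian_orientation src dst A o]|.

(* half graph of (V,A): S subset of A with, for all v,
   #(edges of S incident to v) = d_A(v)/2 (written as 2 * ... = d_A(v),
   so there are none when some degree is odd, as in the paper). *)
Definition half_graph (V E : finType) (src dst : E -> V) (A S : {set E}) : bool :=
  (S \subset A) && [forall v, (deg src dst S v).*2 == deg src dst A v].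

Definition n_half (V E : finType) (src dst : E -> V) (A : {set E}) : nat :=
  #|[set S : {set E} | half_graph src dst A S]|.

From mathcomp Require Import all_boot zify.
Set Implicit Arguments. Unset Strict Implicit. Unset Printing Implicit Defensive.

(* Both counts are instances of one identity.  Fix weights p_v, q_v on the
   edges and call X ⊆ A balanced if, at every vertex v, putting weight p_v on
   the edges of X and q_v on those of A \ X gives the same total as the
   opposite choice (X = edges oriented src -> dst, resp. X = the half graph).
   Pair two balanced subsets X1, X2 of E with their agreement set
   A = {e | e ∈ X1 <-> e ∈ X2}.  With a, a' (resp. b, b') the two totals of
   X1 over A (resp. E \ A), balance of X1 reads a + b = a' + b' and balance of
   X2 reads a + b' = a' + b, i.e. a = a' and b = b': the traces of X1 on A and
   on E \ A are balanced there, and conversely.  Summing over A gives the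
   identity. *)

Lemma forall_andb (T : finType) (P Q : pred T) :
  [forall x, P x] && [forall x, Q x] = [forall x, P x && Q x].
Proof.
apply/andP/forallP => [[/forallP HP /forallP HQ] x | H]; first by rewrite HP HQ.
by split; apply/forallP => x; case/andP: (H x).
Qed.

Lemma card_set_sum_nat (T : finType) (P Q : pred T) :
  #|[set x | P x && Q x]| = \sum_(x | P x) Q x.
Proof. by rewrite -sum1dep_card big_mkcondr. Qed.

Lemma addn_eq_cross (a a' b b' : nat) :
  (a + b == a' + b') && (a + b' == a' + b) = (a == a') && (b == b').
Proof. by apply/andP/andP => -[/eqP h1 /eqP h2]; split; apply/eqP; lia. Qed.

Section BalancedSubsets.
Variable E : finType.

Definition agreement (X Y : {set E}) : {set E} :=
  [set e | (e \in X) == (e \in Y)].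

Lemma agreementK (X : {set E}) : involutive (agreement X).
Proof.
by move=> Y; apply/setP => e; rewrite !inE; case: (e \in X); case: (e \in Y).
Qed.

Lemma sum_setI_setD (R : Type) (idx : R) (op : Monoid.com_law idx)
    (A : {set E}) (F : {set E} -> {set E} -> R) :
  \big[op/idx]_(X : {set E}) F (X :&: A) (X :\: A) =
  \big[op/idx]_(Y : {set E} | Y \subset A)
    \big[op/idx]_(Z : {set E} | Z \subset ~: A) F Y Z.
Proof.
rewrite pair_big_dep (reindex (fun X => (X :&: A, X :\: A))) /=.
  by apply: eq_bigl => X; rewrite subsetIr setDE subsetIr.
exists (fun YZ => YZ.1 :|: YZ.2) => [X _ | [Y Z]]; first exact: setID.
rewrite inE /= => /andP[YA ZA].
have ZAd : [disjoint Z & A] by rewrite disjoints_subset.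
have /eqP YA0 : Y :\: A == set0 by rewrite setD_eq0.
by rewrite setIUl setDUl (setIidPl YA) (disjoint_setI0 ZAd) (setDidPl ZAd) YA0
  setU0 set0U.
Qed.

Definition sel_weight (f g : E -> nat) (A X : {set E}) : nat :=
  \sum_(e in A) (if e \in X then f e else g e).

Lemma sel_weight_setIr (f g : E -> nat) (A X : {set E}) :
  sel_weight f g A (X :&: A) = sel_weight f g A X.
Proof. by apply: eq_bigr => e eA; rewrite inE eA andbT. Qed.

Lemma sel_weight_setT (f g : E -> nat) (A X : {set E}) :
  sel_weight f g [set: E] X = sel_weight f g A X + sel_weight f g (~: A) X.
Proof. by rewrite /sel_weight (big_setID A) setTI setTD. Qed.

Lemma sel_weight_agreement (f g : E -> nat) (A X : {set E}) :
  sel_weight f g A (agreement X A) = sel_weight f g A X.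
Proof. by apply: eq_bigr => e eA; rewrite inE eA eqb_id. Qed.

Lemma sel_weight_agreementC (f g : E -> nat) (A X : {set E}) :
  sel_weight f g (~: A) (agreement X A) = sel_weight g f (~: A) X.
Proof.
apply: eq_bigr => e; rewrite !inE => /negbTE eA.
by rewrite eA eqbF_neg; case: (e \in X).
Qed.

Lemma sel_weightE (f g : E -> nat) (A X : {set E}) :
  sel_weight f g A X = \sum_(e in A :&: X) f e + \sum_(e in A :\: X) g e.
Proof.
rewrite /sel_weight (big_setID X); congr (_ + _); apply: eq_bigr => e.
  by rewrite inE => /andP[_ ->].
by rewrite inE => /andP[/negbTE-> _].
Qed.

Variables (V : finType) (p q : V -> E -> nat).

Definition balanced (A X : {set E}) : bool :=
  [forall v, sel_weight (p v) (q v) A X == sel_weight (q v) (p v) A X].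

Definition n_balanced (A : {set E}) : nat :=
  \sum_(X : {set E} | X \subset A) balanced A X.

Lemma balanced_setIr (A X : {set E}) : balanced A (X :&: A) = balanced A X.
Proof. by apply: eq_forallb => v; rewrite !sel_weight_setIr. Qed.

Lemma balanced_agreement (A X : {set E}) :
  balanced [set: E] X && balanced [set: E] (agreement X A) =
  balanced A X && balanced (~: A) X.
Proof.
rewrite /balanced !forall_andb; apply: eq_forallb => v.
rewrite !(sel_weight_setT _ _ A) !sel_weight_agreement !sel_weight_agreementC.
exact: addn_eq_cross.
Qed.

Theorem n_balanced_sqr :
  n_balanced [set: E] ^ 2 = \sum_A n_balanced A * n_balanced (~: A).
Proof.
have -> : n_balanced [set: E] = \sum_(X : {set E}) balanced [set: E] X.
  by apply: eq_bigl => X; rewrite subsetT.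
rewrite -mulnn big_distrlr /=.
under eq_bigr => X _ do rewrite (reindex_inj (inv_inj (agreementK X))).
rewrite exchange_big; apply: eq_bigr => A _; rewrite big_distrlr /=.
rewrite -(sum_setI_setD _ A (fun Y Z => balanced A Y * balanced (~: A) Z)).
apply: eq_bigr => X _.
by rewrite !mulnb balanced_agreement balanced_setIr setDE balanced_setIr.
Qed.

End BalancedSubsets.

Section Instances.
Variables (V E : finType) (src dst : E -> V).

Lemma n_eul_or_balanced (A : {set E}) :
  n_eul_or src dst A =
  n_balanced (fun v e => (src e == v : nat)) (fun v e => (dst e == v : nat)) A.
Proof.
rewrite /n_eul_or /eulerian_orientation card_set_sum_nat.
rewrite (reindex (fun X : {set E} => [ffun e => e \in X])) /=; last first.
  apply: onW_bij; exists (fun o : {ffun E -> bool} => [set e | o e]) => [X|o].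
    by apply/setP => e; rewrite inE ffunE.
  by apply/ffunP => e; rewrite ffunE inE.
apply: congr_big => // [X | X _].
  apply/forallP/subsetP => [H e eX | XA e]; last first.
    by rewrite ffunE; apply/implyP/contra => /XA.
  by move: (H e); rewrite ffunE eX; case: (e \in A).
congr nat_of_bool; apply: eq_forallb => v; rewrite eq_sym /outdeg /indeg.
by congr (_ == _); rewrite card_set_sum_nat; apply: eq_bigr => e _;
  rewrite ffunE; case: (e \in X).
Qed.

Lemma deg_sum (A : {set E}) (v : V) :
  deg src dst A v = \sum_(e in A) ((src e == v) || (dst e == v) : nat).
Proof. by rewrite /deg /incident card_set_sum_nat. Qed.

Lemma n_half_balanced (A : {set E}) :
  n_half src dst A =
  n_balanced (fun v e => ((src e == v) || (dst e == v) : nat)) (fun _ _ => 0) A.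
Proof.
rewrite /n_half /half_graph card_set_sum_nat; apply: eq_bigr => S SA.
congr nat_of_bool; apply: eq_forallb => v.
rewrite !sel_weightE /= !big1_eq addn0 add0n.
by rewrite !deg_sum [X in _ == X](big_setID S) (setIidPr SA) -addnn eqn_add2l.
Qed.

End Instances.

Theorem theorem1p1 (V E : finType) (src dst : E -> V)
  (loopless : forall e, src e != dst e)
  (eulerian : forall v, ~~ odd (deg src dst [set: E] v)) :
  (n_eul_or src dst [set: E]) ^ 2 =
    \sum_(A : {set E}) n_eul_or src dst A * n_eul_or src dst (~: A)
  /\
  (n_half src dst [set: E]) ^ 2 =
    \sum_(A : {set E}) n_half src dst A * n_half src dst (~: A).
Proof.
split.
  rewrite n_eul_or_balanced n_balanced_sqr.
  by apply: eq_bigr => A _; rewrite !n_eul_or_balanced.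
rewrite n_half_balanced n_balanced_sqr.
by apply: eq_bigr => A _; rewrite !n_half_balanced.
Qed.
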